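(* Let $X$ be a random variable with mean zero, finite variance $\sigma^2>0$ and density $f_X=e^{-\varphi}$ with $\varphi$ differentiable, and suppose there are $x_l<0<x_r$ such that 1. $\varphi'(x)\le x/\sigma^2$ for $x\le x_l$, 2. $\varphi'(x)\ge x/\sigma^2$ for $x\ge x_r$. Let $X^*$ have the zero bias distribution of $X$, with density $f_{X^*}$. Then $f_{X^*}(x)\le f_X(x)$ for all $x\in(-\infty,x_l)\cup(x_r,\infty)$. If in addition $\mathbb{E}X^3=0$ and $f_X(x)\le f_{X^*}(x)$ for every $x\in(x_l,x_r)$, then $X^*$ is smaller than $X$ in the convex order.
   Context: Zero bias transform: for $X$ with mean zero and finite variance $\sigma^2$, $X^*$ has the zero bias distribution of $X$ if $\mathbb{E}[Xf(X)]=\sigma^2\mathbb{E}[f'(X^* )]$ for all absolutely continuous $f$ for which the expectations exist; $X^*$ is absolutely continuous with density $f_{X^*}(t)=\sigma^{-2}\mathbb{E}[X\mathbb{I}_{X>t}]=-\sigma^{-2}\mathbb{E}[X\mathbb{I}_{X\le t}]$. Convex order: $U$ is smaller than $V$ in the convex order if $\mathbb{E}g(U)\le\mathbb{E}g(V)$ for every convex $g$ with both expectations finite. *)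

From HB Require Import structures.
From mathcomp Require Import all_boot all_order all_algebra.
From mathcomp Require Import all_classical all_reals all_analysis.
Set Implicit Arguments. Unset Strict Implicit. Unset Printing Implicit Defensive.
Import Order.TTheory GRing.Theory Num.Theory.
Local Open Scope classical_set_scope.
Local Open Scope ring_scope.

Definition zero_bias_density {R : realType} (f : R -> R) (s2 : R) (t : R) : R :=
  s2^-1 * fine (\int[@lebesgue_measure R]_(x in `]t, +oo[) (x * f x)%:E)%E.

Definition convex_order_le {R : realType} (fU fV : R -> R) : Prop :=
  forall g : R -> R,
    convex_function [set: R] g ->
    (@lebesgue_measure R).-integrable [set: R] (fun x => (g x * fU x)%:E) ->
    (@lebesgue_measure R).-integrable [set: R] (fun x => (g x * fV x)%:E) ->
    (\int[@lebesgue_measure R]_x (g x * fU x)%:E <=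
     \int[@lebesgue_measure R]_x (g x * fV x)%:E)%E.

(* Write q(x) = x^2 / (2 s2) and fz for the zero bias density of f.  The bounds
   on phi' say that phi - q decreases on ]-oo, xl] and increases on [xr, +oo[,
   i.e. f e^q is monotone on both tails.  On the right tail this bounds
   s2 fz(x) = \int_x^oo y f(y) dy by f(x) e^q(x) \int_x^oo y e^-q(y) dy = s2 f(x);
   since X is centred, s2 fz(x) = \int_-oo^x (-y) f(y) dy and the left tail is
   the mirror image.

   Fubini applied to the kernel k(t, y) = y f(y) (1_{0 <= t < y} - 1_{y <= t < 0}),
   whose integral in t is y^2 f(y) and in y is s2 fz(t), shows that fz is a
   probability density with mean E X^3 / (2 s2) = 0.  So f and fz have the same
   mass and mean, while f - fz is >= 0 off ]xl, xr[ and <= 0 on it.  For convex g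
   and its chord l through xl and xr, g - l has the same sign pattern, hence
   \int (g - l) (f - fz) >= 0; as l is affine, \int l f = \int l fz, and so
   \int g fz <= \int g f. *)

From HB Require Import structures.
From mathcomp Require Import all_boot all_order all_algebra.
From mathcomp Require Import all_classical all_reals all_analysis.
From mathcomp Require Import measurable_realfun ring lra.
Set Implicit Arguments. Unset Strict Implicit. Unset Printing Implicit Defensive.
Import Order.TTheory GRing.Theory Num.Theory.
Import numFieldNormedType.Exports.
Local Open Scope classical_set_scope.
Local Open Scope ring_scope.

Local Notation mu := (@lebesgue_measure _).

Definition gauss_potential {R : realType} (s2 x : R) : R := x ^+ 2 / (2 * s2).

Lemma gauss_potentialN {R : realType} (s2 x : R) :
  gauss_potential s2 (- x) = gauss_potential s2 x.
Proof. by rewrite /gauss_potential sqrrN. Qed.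

Lemma is_derive_gauss_potential {R : realType} (s2 x : R) : s2 != 0 ->
  is_derive x 1 (gauss_potential s2) (x / s2).
Proof.
move=> s2N0; rewrite /gauss_potential; apply: is_derive_eq.
by rewrite scaler0 add0r /GRing.scale /= mulr1 -mulr2n -mulr_natr; field.
Qed.

Lemma continuous_gauss_potential {R : realType} (s2 : R) : s2 != 0 ->
  continuous (gauss_potential s2).
Proof.
move=> s2N0 x; apply: differentiable_continuous; apply/derivable1_diffP.
have ? := is_derive_gauss_potential x s2N0; exact: ex_derive.
Qed.

Lemma integral_itv_id {R : realType} (a b : R) : a < b ->
  (\int[mu]_(t in `[a, b[) t%:E = ((b ^+ 2 - a ^+ 2) / 2)%:E)%E.
Proof.
move=> ab; have one_neq0 : (1 : R) != 0 := oner_neq0 R.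
have q_cont := continuous_gauss_potential one_neq0.
rewrite integral_itv_bndo_bndc; last exact/measurable_EFinP.
rewrite (@continuous_FTC2 R id (gauss_potential 1) a b ab).
- by rewrite /gauss_potential mulr1 -EFinB -mulrBl.
- by apply/continuous_subspaceT => x; exact: cvg_id.
- split.
  + by move=> x _; have ? := is_derive_gauss_potential x one_neq0; exact: ex_derive.
  + exact/cvg_at_right_filter/q_cont.
  + exact/cvg_at_left_filter/q_cont.
- move=> x _; have ? := is_derive_gauss_potential x one_neq0.
  by rewrite derive1E derive_val divr1.
Qed.

Lemma integral_itv_scale_id {R : realType} (a b c : R) : a < b ->
  (\int[mu]_(t in `[a, b[) (c * t)%:E = (c * ((b ^+ 2 - a ^+ 2) / 2))%:E)%E.
Proof.
move=> ab; under eq_integral do rewrite EFinM.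
rewrite integralZl ?integral_itv_id -?EFinM //.
have : mu.-integrable `[a, b] (EFin \o id).
  apply: continuous_compact_integrable; first exact: segment_compact.
  by apply/continuous_subspaceT => x; exact: cvg_id.
by apply: integrableS => //; apply: subset_itv; rewrite bnd_simp.
Qed.

Section gauss_tail.
Variables (R : realType) (s2 : R).
Hypothesis s2_gt0 : 0 < s2.

Local Notation q := (gauss_potential s2).

Let s2_neq0 : s2 != 0. Proof. exact: lt0r_neq0. Qed.

Let gauss_tail_primitive (y : R) := - s2 * expR (- q y).

Let is_derive_gauss_tail_primitive (x : R) :
  is_derive x 1 gauss_tail_primitive (x * expR (- q x)).
Proof.
have ? := is_derive_gauss_potential x s2_neq0.
rewrite /gauss_tail_primitive; apply: is_derive_eq.
by rewrite /GRing.scale /=; field.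
Qed.

Let continuous_gauss_tail_primitive : continuous gauss_tail_primitive.
Proof.
move=> x; apply: differentiable_continuous; apply/derivable1_diffP.
have ? := is_derive_gauss_tail_primitive x; exact: ex_derive.
Qed.

Lemma continuous_mul_gauss : continuous (fun y : R => y * expR (- q y)).
Proof.
move=> x; apply: differentiable_continuous; apply/derivable1_diffP.
have ? := is_derive_gauss_potential x s2_neq0.
by apply: derivableM; [exact: derivable_id | exact: ex_derive].
Qed.

Lemma integral_gauss_tail (a : R) : 0 <= a ->
  (\int[mu]_(y in `[a, +oo[) (y * expR (- q y))%:E = (s2 * expR (- q a))%:E)%E.
Proof.
move=> a_ge0; have q_cvgy : q y @[y --> +oo] --> +oo.
  apply: gt0_cvgMly; last exact: cvgr_expr2.
  by rewrite invr_gt0 mulr_gt0.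
rewrite (@ge0_continuous_FTC2y R _ gauss_tail_primitive a 0).
- by rewrite sub0e /gauss_tail_primitive -EFinN mulNr opprK.
- by move=> x ax; rewrite mulr_ge0 ?expR_ge0 // (le_trans a_ge0).
- exact/continuous_subspaceT/continuous_mul_gauss.
- rewrite -(mulr0 (- s2)); apply: cvgMl_tmp.
  exact: (cvg_comp _ _ q_cvgy (@cvgr_expR R)).
- by move=> x _; have ? := is_derive_gauss_tail_primitive x; exact: ex_derive.
- exact/cvg_at_right_filter/continuous_gauss_tail_primitive.
- move=> x _; have ? := is_derive_gauss_tail_primitive x.
  by rewrite derive1E derive_val.
Qed.

Lemma integral_gauss_dominated_tail (h : R -> R) (a C : R) :
  0 <= a -> 0 <= C -> measurable_fun `[a, +oo[ h ->
  (forall y, a <= y -> 0 <= h y <= C * (y * expR (- q y))) ->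
  (\int[mu]_(y in `[a, +oo[) (h y)%:E <= (C * (s2 * expR (- q a)))%:E)%E.
Proof.
move=> a_ge0 C_ge0 mh h_dom.
have mg : measurable_fun `[a, +oo[ (fun y => y * expR (- q y)).
  exact: measurable_funS (continuous_measurable_fun continuous_mul_gauss).
rewrite EFinM -integral_gauss_tail // -ge0_integralZl_EFin //; last 2 first.
- move=> y; rewrite /= in_itv /= andbT => ay.
  by rewrite lee_fin mulr_ge0 ?expR_ge0 // (le_trans a_ge0).
- exact/measurable_EFinP.
apply: ge0_le_integral => //.
- by move=> y; rewrite /= in_itv /= andbT => /h_dom /andP[].
- exact/measurable_EFinP.
- by apply/measurable_EFinP; apply: measurable_funM.
- by move=> y; rewrite /= in_itv /= andbT => /h_dom /andP[_]; rewrite -EFinM lee_fin.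
Qed.

End gauss_tail.

Lemma integral_upper_tail_centered {R : realType} (h : R -> R) (t : R) :
  mu.-integrable [set: R] (EFin \o h) -> (\int[mu]_x (h x)%:E = 0)%E ->
  (\int[mu]_(y in `]t, +oo[) (h y)%:E = - \int[mu]_(y in `]-oo, t]) (h y)%:E)%E.
Proof.
move=> hint h0.
have fin (D : set R) : measurable D -> (\int[mu]_(y in D) (h y)%:E)%E \is a fin_num.
  by move=> mD; apply: integrable_fin_num => //; exact: integrableS hint.
move: h0; rewrite -(itv_setU_setT false t) integral_setU //; last 2 first.
- by rewrite itv_setU_setT; exact: measurable_int hint.
- by apply/disj_setPS => y [] /=; rewrite !in_itv /= => ? ?; lra.
rewrite -(fineK (fin _ (measurable_itv `]-oo, t]))).
rewrite -(fineK (fin _ (measurable_itv `]t, +oo[))) -EFinD => -[sum0].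
by rewrite -EFinN; congr EFin; lra.
Qed.

Lemma zero_bias_densityE {R : realType} (f : R -> R) (s2 t : R) : s2 != 0 ->
  mu.-integrable [set: R] (fun y => (y * f y)%:E) ->
  ((s2 * zero_bias_density f s2 t)%:E =
   \int[mu]_(y in `]t, +oo[) (y * f y)%:E)%E.
Proof.
move=> s2N0 yf_int; rewrite /zero_bias_density mulrA divff // mul1r fineK //.
by apply: integrable_fin_num => //; exact: integrableS yf_int.
Qed.

Section zero_bias_tail.
Variables (R : realType) (f : R -> R) (s2 : R).
Hypotheses (s2_gt0 : 0 < s2) (f_cont : continuous f) (f_ge0 : forall x, 0 <= f x).

Local Notation q := (gauss_potential s2).

Let mul_id_cont : continuous (fun y : R => y * f y).
Proof. by move=> y; apply: continuousM; [exact: cvg_id | exact: f_cont]. Qed.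

Let opp_mul_id_cont : continuous (fun y : R => - (y * f y)).
Proof.
move=> y; have h : {for y, continuous (fun y : R => y * f y)} by exact: mul_id_cont.
exact: (continuousN h).
Qed.

Let gauss_split (x : R) :
  s2 * f x = f x * expR (q x) * (s2 * expR (- q x)).
Proof. by rewrite mulrACA -expRD subrr expR0 mulr1 mulrC. Qed.

Let gauss_dominated (x y : R) :
  f y * expR (q y) <= f x * expR (q x) ->
  f y <= f x * expR (q x) * expR (- q y).
Proof. by move=> le_fy; rewrite expRN ler_pdivlMr ?expR_gt0. Qed.

Lemma upper_tail_le_gauss (x : R) : 0 <= x ->
  (forall y, x <= y -> f y * expR (q y) <= f x * expR (q x)) ->
  (\int[mu]_(y in `]x, +oo[) (y * f y)%:E <= (s2 * f x)%:E)%E.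
Proof.
move=> x_ge0 f_dom.
rewrite integral_itv_obnd_cbnd; last first.
  by apply/measurable_EFinP; exact: measurable_funS (continuous_measurable_fun mul_id_cont).
rewrite gauss_split; apply: integral_gauss_dominated_tail => //.
- by rewrite mulr_ge0 ?expR_ge0.
- exact: measurable_funS (continuous_measurable_fun mul_id_cont).
move=> y xy; have y_ge0 := le_trans x_ge0 xy.
rewrite mulr_ge0 //= mulrCA ler_wpM2l //.
exact/gauss_dominated/f_dom.
Qed.

Lemma lower_tail_le_gauss (x : R) : x <= 0 ->
  (forall y, y <= x -> f y * expR (q y) <= f x * expR (q x)) ->
  (\int[mu]_(y in `]-oo, x]) (- (y * f y))%:E <= (s2 * f x)%:E)%E.
Proof.
move=> x_le0 f_dom.
rewrite -[x]opprK ge0_integration_by_substitutionNy; last 2 first.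
- by apply/continuous_subspaceT => y; exact: opp_mul_id_cont.
- by move=> y; rewrite in_itv /= => yx; rewrite oppr_ge0 nmulr_rle0 //; lra.
rewrite opprK gauss_split -(gauss_potentialN s2 x).
apply: integral_gauss_dominated_tail => //.
- by rewrite oppr_ge0.
- by rewrite mulr_ge0 ?expR_ge0.
- apply: measurable_funS (continuous_measurable_fun _) => // y.
  apply: continuous_comp; first exact: (continuousN (@cvg_id _ (nbhs y))).
  exact: opp_mul_id_cont.
move=> y xy /=; have y_ge0 : 0 <= y by rewrite (le_trans _ xy) // oppr_ge0.
rewrite mulNr opprK mulr_ge0 //= mulrCA ler_wpM2l //.
rewrite gauss_potentialN -(gauss_potentialN s2 y); apply/gauss_dominated/f_dom.
by rewrite lerNl.
Qed.

Hypothesis yf_int : mu.-integrable [set: R] (fun y => (y * f y)%:E).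

Let zero_bias_density_le (x : R) :
  (\int[mu]_(y in `]x, +oo[) (y * f y)%:E <= (s2 * f x)%:E)%E ->
  zero_bias_density f s2 x <= f x.
Proof.
by rewrite -(ler_pM2l s2_gt0) -lee_fin zero_bias_densityE ?lt0r_neq0.
Qed.

Lemma zero_bias_density_le_right (x : R) : 0 <= x ->
  (forall y, x <= y -> f y * expR (q y) <= f x * expR (q x)) ->
  zero_bias_density f s2 x <= f x.
Proof. by move=> x_ge0 f_dom; exact/zero_bias_density_le/upper_tail_le_gauss. Qed.

Lemma zero_bias_density_le_left (x : R) :
  (\int[mu]_y (y * f y)%:E = 0)%E -> x <= 0 ->
  (forall y, y <= x -> f y * expR (q y) <= f x * expR (q x)) ->
  zero_bias_density f s2 x <= f x.
Proof.
move=> mean0 x_le0 f_dom; apply: zero_bias_density_le.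
rewrite integral_upper_tail_centered // -mulN1e -integralZl //; last first.
  exact: integrableS yf_int.
under eq_integral do rewrite -EFinM mulN1r.
exact: lower_tail_le_gauss.
Qed.

End zero_bias_tail.

Section zero_bias_moments.
Variables (R : realType) (f : R -> R) (s2 : R).
Hypotheses (s2_gt0 : 0 < s2) (f_meas : measurable_fun [set: R] f)
  (f_ge0 : forall x, 0 <= f x).
Hypotheses (yf_int : mu.-integrable [set: R] (fun y => (y * f y)%:E))
  (mean0 : (\int[mu]_y (y * f y)%:E = 0)%E).

Local Notation zb := (zero_bias_density f s2).

Let s2_neq0 : s2 != 0. Proof. exact: lt0r_neq0. Qed.

Let h (y : R) := y * f y.

Let h_meas : measurable_fun [set: R] h.
Proof. exact: measurable_funM. Qed.

Let Ap : set (R * R) := [set p | (0 <= p.1) && (p.1 < p.2)].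
Let An : set (R * R) := [set p | (p.2 <= p.1) && (p.1 < 0)].

Let measurable_Ap : measurable Ap.
Proof.
have := measurable_and (measurable_fun_ler (measurable_cst (0 : R)) measurable_fst)
  (measurable_fun_ltr measurable_fst measurable_snd) measurableT (Y := [set true]) I.
by rewrite setTI.
Qed.

Let measurable_An : measurable An.
Proof.
have := measurable_and (measurable_fun_ler measurable_snd measurable_fst)
  (measurable_fun_ltr measurable_fst (measurable_cst (0 : R))) measurableT
  (Y := [set true]) I.
by rewrite setTI.
Qed.

Let kernel (p : R * R) : R := (\1_Ap p - \1_An p) * h p.2.

Let kernel_meas : measurable_fun [set: R * R] kernel.
Proof.
apply: measurable_funM.
  by apply: measurable_funB; exact: measurable_indic.
exact: measurableT_comp h_meas measurable_snd.
Qed.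

Let indic_congr (T U : Type) (A : set T) (B : set U) x y :
  (A x <-> B y) -> \1_A x = \1_B y :> R.
Proof.
move=> AB; rewrite !indicE (_ : x \in A = (y \in B)) //.
by apply/idP/idP => /set_mem /AB /mem_set.
Qed.

Let indic_notin (T : Type) (A : set T) x : ~ A x -> \1_A x = 0 :> R.
Proof. by move=> Ax; rewrite indicE memNset. Qed.

Let kernel_t_ge0 t y : 0 <= t -> kernel (t, y) = \1_`]t, +oo[ y * h y.
Proof.
move=> t_ge0; rewrite /kernel (@indic_notin _ An) ?subr0; last by rewrite /An /=; lra.
by congr (_ * _); apply: indic_congr; rewrite /Ap /= in_itv /= andbT t_ge0.
Qed.

Let kernel_t_lt0 t y : t < 0 -> kernel (t, y) = \1_`]-oo, t] y * - h y.
Proof.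
move=> t_lt0; rewrite /kernel (@indic_notin _ Ap) ?sub0r ?mulNr ?mulrN; last first.
  by rewrite /Ap /=; lra.
by congr (- (_ * _)); apply: indic_congr; rewrite /An /= in_itv /= t_lt0 andbT.
Qed.

Let kernel_y_gt0 t y : 0 < y -> kernel (t, y) = \1_`[0, y[ t * h y.
Proof.
move=> y_gt0; rewrite /kernel (@indic_notin _ An) ?subr0; last by rewrite /An /=; lra.
by congr (_ * _); apply: indic_congr; rewrite /Ap /= in_itv.
Qed.

Let kernel_y_lt0 t y : y < 0 -> kernel (t, y) = \1_`[y, 0[ t * - h y.
Proof.
move=> y_lt0; rewrite /kernel (@indic_notin _ Ap) ?sub0r ?mulNr ?mulrN; last first.
  by rewrite /Ap /=; lra.
by congr (- (_ * _)); apply: indic_congr; rewrite /An /= in_itv.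
Qed.

Let kernel_y0 t : kernel (t, 0) = 0.
Proof. by rewrite /kernel /h mul0r mulr0. Qed.

Let kernel_ge0 p : 0 <= kernel p.
Proof.
case: p => t y; have [t_ge0|t_lt0] := leP 0 t.
  rewrite kernel_t_ge0 // indicE; case: (boolP (y \in _)) => [|_]; last by rewrite mul0r.
  by rewrite inE /= in_itv /= andbT => ty; rewrite mul1r mulr_ge0 //; lra.
rewrite kernel_t_lt0 // indicE; case: (boolP (y \in _)) => [|_]; last by rewrite mul0r.
by rewrite inE /= in_itv /= => yt; rewrite mul1r oppr_ge0 /h nmulr_rle0 //; lra.
Qed.

Let integral_indic_mul (A : set R) (u : R -> R) :
  (\int[mu]_x (\1_A x * u x)%:E = \int[mu]_(x in A) (u x)%:E)%E.
Proof.
rewrite [RHS]integral_mkcond; apply: eq_integral => x _.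
by rewrite /patch indicE; case: (x \in A); rewrite ?mul1r ?mul0r.
Qed.

Let integralN_h (D : set R) : measurable D ->
  (\int[mu]_(y in D) (- h y)%:E = - \int[mu]_(y in D) (h y)%:E)%E.
Proof.
move=> mD; under eq_integral do rewrite -mulN1r EFinM.
by rewrite integralZl ?mulN1e //; exact: integrableS yf_int.
Qed.

Let integral_kernel_dy t :
  (\int[mu]_y (kernel (t, y))%:E = (s2 * zb t)%:E)%E.
Proof.
rewrite zero_bias_densityE //; have [t_ge0|t_lt0] := leP 0 t.
  by under eq_integral do rewrite kernel_t_ge0 //; rewrite integral_indic_mul.
under eq_integral do rewrite kernel_t_lt0 //.
by rewrite integral_indic_mul integralN_h // integral_upper_tail_centered.
Qed.

Let lebesgue_measure_itv_co (a b : R) : a < b -> mu `[a, b[ = (b - a)%:E.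
Proof.
by move=> ab; have := lebesgue_measure_itv `[a, b[; rewrite /= lte_fin ab -EFinB.
Qed.

Let integral_kernel_dt y : (\int[mu]_t (kernel (t, y))%:E = (y ^+ 2 * f y)%:E)%E.
Proof.
have [y_gt0|y_lt0|<-] := ltgtP 0 y.
- under eq_integral do rewrite kernel_y_gt0 //.
  rewrite integral_indic_mul integral_cst // [X in (_ * X)%E](_ : _ = y%:E).
    by rewrite -EFinM /h mulrC mulrA -expr2.
  by have := lebesgue_measure_itv_co y_gt0; rewrite subr0 => mu_itv; exact: mu_itv.
- under eq_integral do rewrite kernel_y_lt0 //.
  rewrite integral_indic_mul integral_cst // [X in (_ * X)%E](_ : _ = (- y)%:E).
    by rewrite -EFinM /h mulrN mulNr opprK mulrC mulrA -expr2.
  by have := lebesgue_measure_itv_co y_lt0; rewrite sub0r => mu_itv; exact: mu_itv.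
- under eq_integral do rewrite kernel_y0.
  by rewrite integral0 expr0n /= mul0r.
Qed.

Let kernel_section_integrable t : mu.-integrable [set: R] (fun y => (kernel (t, y))%:E).
Proof.
apply/integrableP; split.
  by apply/measurable_EFinP; exact: measurableT_comp kernel_meas (pair1_measurable t).
under eq_integral do rewrite abse_EFin ger0_norm //.
by rewrite integral_kernel_dy ltry.
Qed.

Lemma zero_bias_density_ge0 t : 0 <= zb t.
Proof.
rewrite -(pmulr_rge0 _ s2_gt0) -lee_fin -integral_kernel_dy.
by apply: integral_ge0 => y _; rewrite lee_fin.
Qed.

Lemma measurable_zero_bias_density : measurable_fun [set: R] zb.
Proof.
have : measurable_fun [set: R] (fun t => s2 * zb t).
  apply/measurable_EFinP; rewrite [X in measurable_fun _ X](_ : _ =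
    (fun t => \int[mu]_y (kernel (t, y))%:E)%E); last first.
    by apply/funext => t; rewrite integral_kernel_dy.
  have := measurable_fun_fubini_tonelli_F (m2 := mu) (fun p => (kernel p)%:E).
  apply => [|p]; first exact/measurable_EFinP.
  by rewrite lee_fin.
move=> /(measurable_funM (measurable_cst s2^-1)).
by apply: eq_measurable_fun => t _ /=; rewrite mulrA mulVf // mul1r.
Qed.

Lemma integral_zero_bias_density :
  (\int[mu]_t (zb t)%:E = s2^-1%:E * \int[mu]_y (y ^+ 2 * f y)%:E)%E.
Proof.
have tonelli : (\int[mu]_t (s2 * zb t)%:E = \int[mu]_y (y ^+ 2 * f y)%:E)%E.
  under eq_integral do rewrite -integral_kernel_dy.
  under [RHS]eq_integral do rewrite -integral_kernel_dt.
  apply: (@fubini_tonelli _ _ _ _ R mu mu (fun p => (kernel p)%:E)) => [|p].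
    exact/measurable_EFinP.
  by rewrite lee_fin.
rewrite -tonelli; under [X in (_ * X)%E]eq_integral do rewrite EFinM.
rewrite ge0_integralZl_EFin ?muleA -?EFinM ?mulVf ?mul1e ?(ltW s2_gt0) //.
- by move=> t _; rewrite lee_fin zero_bias_density_ge0.
- by apply/measurable_EFinP; exact: measurable_zero_bias_density.
Qed.

Let integral_t_mul_kernel_dy t :
  (\int[mu]_y (t * kernel (t, y))%:E = (t * (s2 * zb t))%:E)%E.
Proof.
under eq_integral do rewrite EFinM.
by rewrite integralZl // integral_kernel_dy -EFinM.
Qed.

Let integral_t_mul_kernel_dt y :
  (\int[mu]_t (t * kernel (t, y))%:E = (y ^+ 3 * f y / 2)%:E)%E.
Proof.
have [y_gt0|y_lt0|<-] := ltgtP 0 y.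
- under eq_integral => t _ do rewrite kernel_y_gt0 // mulrCA (mulrC t).
  by rewrite integral_indic_mul integral_itv_scale_id //; congr EFin; rewrite /h; ring.
- under eq_integral => t _ do rewrite kernel_y_lt0 // mulrCA (mulrC t).
  by rewrite integral_indic_mul integral_itv_scale_id //; congr EFin; rewrite /h; ring.
- under eq_integral do rewrite kernel_y0 mulr0.
  by rewrite integral0 expr0n /= !mul0r.
Qed.

Let integral_abs_t_mul_kernel_dt y :
  (\int[mu]_t `|(t * kernel (t, y))%:E| = (`|y| ^+ 3 * f y / 2)%:E)%E.
Proof.
under eq_integral do rewrite abse_EFin normrM (ger0_norm (kernel_ge0 _)).
have [y_gt0|y_lt0|<-] := ltgtP 0 y.
- under eq_integral do rewrite kernel_y_gt0 // mulrCA (mulrC `|_|).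
  rewrite integral_indic_mul (gtr0_norm y_gt0).
  transitivity (\int[mu]_(t in `[0%R, y[) (h y * t)%:E)%E.
    apply: eq_integral => t; rewrite inE /= in_itv /= => /andP[t_ge0 _].
    by rewrite ger0_norm.
  by rewrite integral_itv_scale_id //; congr EFin; rewrite /h; ring.
- under eq_integral do rewrite kernel_y_lt0 // mulrCA (mulrC `|_|).
  rewrite integral_indic_mul (ltr0_norm y_lt0).
  transitivity (\int[mu]_(t in `[y, 0%R[) (h y * t)%:E)%E.
    apply: eq_integral => t; rewrite inE /= in_itv /= => /andP[_ t_lt0].
    by rewrite ltr0_norm // mulrNN.
  by rewrite integral_itv_scale_id //; congr EFin; rewrite /h; ring.
- under eq_integral do rewrite kernel_y0 mulr0.
  by rewrite integral0 normr0 expr0n /= !mul0r.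
Qed.

Section third_moment.
Hypothesis y3f_int : mu.-integrable [set: R] (fun y => (y ^+ 3 * f y)%:E).

Let t_mul_kernel_integrable :
  (mu \x mu)%E.-integrable [set: R * R] (fun p => (p.1 * kernel p)%:E).
Proof.
have t_mul_kernel_meas : measurable_fun [set: R * R] (fun p => (p.1 * kernel p)%:E).
  by apply/measurable_EFinP; exact: measurable_funM.
apply/(integrable21ltyP mu mu t_mul_kernel_meas).
under eq_integral do rewrite integral_abs_t_mul_kernel_dt.
have /integrableP[_] := y3f_int; apply: le_lt_trans.
apply: ge0_le_integral => //.
- by move=> y _; rewrite lee_fin divr_ge0 // mulr_ge0 // exprn_ge0.
- apply/measurable_EFinP; apply: measurable_funM => //.
  by apply: measurable_funM => //; apply: measurable_funX; exact: normr_measurable.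
- by apply/measurableT_comp/measurable_EFinP => //; exact: measurable_funM.
move=> y _; rewrite abse_EFin lee_fin normrM normrX (ger0_norm (f_ge0 y)).
by rewrite ler_pdivrMr // ler_peMr ?mulr_ge0 ?exprn_ge0 // ler1n.
Qed.

Let t_mul_zb_scaled_integrable :
  mu.-integrable [set: R] (fun t => (t * (s2 * zb t))%:E).
Proof.
by apply: eq_integrable (integrable_fubini_F t_mul_kernel_integrable) => // t _;
  exact: integral_t_mul_kernel_dy.
Qed.

Lemma integrable_mul_zero_bias_density :
  mu.-integrable [set: R] (fun t => (t * zb t)%:E).
Proof.
apply: eq_integrable (integrableZl measurableT s2^-1 t_mul_zb_scaled_integrable) => // t _.
by rewrite -EFinM mulrCA mulKf.
Qed.

Lemma integral_mul_zero_bias_density :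
  (\int[mu]_t (t * zb t)%:E = (2 * s2)^-1%:E * \int[mu]_y (y ^+ 3 * f y)%:E)%E.
Proof.
have fubini : (\int[mu]_t (t * (s2 * zb t))%:E =
               2^-1%:E * \int[mu]_y (y ^+ 3 * f y)%:E)%E.
  under eq_integral do rewrite -integral_t_mul_kernel_dy.
  rewrite (Fubini t_mul_kernel_integrable).
  under eq_integral do rewrite integral_t_mul_kernel_dt mulrC EFinM.
  exact: integralZl.
rewrite mulrC invfM EFinM -muleA -fubini -integralZl //.
by apply: eq_integral => t _; rewrite -EFinM [X in _ = X%:E]mulrCA mulKf.
Qed.

End third_moment.

End zero_bias_moments.

Section chord.
Variables (R : realType) (g : R -> R).
Hypothesis g_cvx : convex_function [set: R] g.

Definition chord (a b x : R) : R := ((b - x) * g a + (x - a) * g b) / (b - a).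

Lemma chord_affine (a b x : R) :
  chord a b x = (b * g a - a * g b) / (b - a) + (g b - g a) / (b - a) * x.
Proof. by rewrite /chord; ring. Qed.

Lemma convex_three_point (x y z : R) : x <= y <= z -> x < z ->
  (z - x) * g y <= (z - y) * g x + (y - x) * g z.
Proof.
move=> /andP[xy yz] xz; have zx_gt0 : 0 < z - x by rewrite subr_gt0.
set t := (z - y) / (z - x).
have t_ge0 : 0 <= t by rewrite divr_ge0 ?subr_ge0 // ltW.
have t_le1 : t <= 1 by rewrite ler_pdivrMr // mul1r lerD2l lerN2.
have : g (t * x + (1 - t) * z) <= t * g x + (1 - t) * g z.
  by have := g_cvx (Itv.mk (itv01_subdef t_ge0 t_le1)); apply; rewrite inE.
have -> : t * x + (1 - t) * z = y by rewrite /t; field; exact: lt0r_neq0.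
have expand : (z - x) * (t * g x + (1 - t) * g z) = (z - y) * g x + (y - x) * g z.
  by rewrite /t; field; exact: lt0r_neq0.
by rewrite -(ler_pM2l zx_gt0) expand.
Qed.

Lemma convex_le_chord (a b x : R) : a < b -> a <= x <= b -> g x <= chord a b x.
Proof.
move=> ab axb; rewrite /chord ler_pdivlMr ?subr_gt0 // mulrC.
exact: convex_three_point.
Qed.

Lemma chord_le_convex (a b x : R) : a < b -> x <= a \/ b <= x -> chord a b x <= g x.
Proof.
move=> ab xab; rewrite /chord ler_pdivrMr ?subr_gt0 // mulrC.
case: xab => [xa|bx].
- have xab : x <= a <= b by rewrite xa ltW.
  by have := convex_three_point xab (le_lt_trans xa ab); lra.
- have abx : a <= b <= x by rewrite bx ltW.
  by have := convex_three_point abx (lt_le_trans ab bx); lra.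
Qed.

Lemma convex_chord_gap_mul_ge0 (a b x d : R) : a < b ->
  ((x < a) || (b < x) -> 0 <= d) -> (a < x < b -> d <= 0) ->
  0 <= (g x - chord a b x) * d.
Proof.
move=> ab d_out d_in; have [x_out|x_in] := boolP ((x < a) || (b < x)).
  apply: mulr_ge0; rewrite ?subr_ge0 ?d_out //.
  by apply: chord_le_convex => //; case/orP: x_out => /ltW; [left|right].
have x_ab : a <= x <= b by rewrite negb_or -!leNgt in x_in.
have [x_mid|x_end] := boolP ((a < x) && (x < b)).
  by apply: mulr_le0; rewrite ?subr_le0 ?d_in //; exact: convex_le_chord.
suff -> : g x = chord a b x by rewrite subrr mul0r.
apply/le_anti; rewrite convex_le_chord //= chord_le_convex //.
by move: x_end; rewrite negb_and -!leNgt => /orP[]; [left|right].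
Qed.

End chord.

Section affine_moment.
Variables (R : realType) (u : R -> R).
Hypotheses (u_int : mu.-integrable [set: R] (fun x => (u x)%:E))
  (xu_int : mu.-integrable [set: R] (fun x => (x * u x)%:E)).

Lemma integrable_affine_mul (c0 c1 : R) :
  mu.-integrable [set: R] (fun x => ((c0 + c1 * x) * u x)%:E).
Proof.
have := integrableD measurableT (integrableZl measurableT c0 u_int)
  (integrableZl measurableT c1 xu_int).
by apply: eq_integrable => // x _; rewrite -!EFinM -EFinD mulrDl mulrA.
Qed.

Lemma Rintegral_affine_mul (c0 c1 : R) :
  \int[mu]_x ((c0 + c1 * x) * u x) =
  c0 * \int[mu]_x u x + c1 * \int[mu]_x (x * u x).
Proof.
rewrite -(RintegralZl c0 measurableT u_int) -(RintegralZl c1 measurableT xu_int).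
rewrite -RintegralD //; last 2 first.
- by apply: eq_integrable (integrableZl measurableT c0 u_int) => // x _; rewrite -EFinM.
- by apply: eq_integrable (integrableZl measurableT c1 xu_int) => // x _; rewrite -EFinM.
by apply: eq_Rintegral => x _; rewrite mulrDl mulrA.
Qed.

End affine_moment.

Lemma convex_order_le_of_crossing {R : realType} (fU fV : R -> R) (a b : R) :
  a < b ->
  mu.-integrable [set: R] (fun x => (fU x)%:E) ->
  mu.-integrable [set: R] (fun x => (fV x)%:E) ->
  mu.-integrable [set: R] (fun x => (x * fU x)%:E) ->
  mu.-integrable [set: R] (fun x => (x * fV x)%:E) ->
  (\int[mu]_x (fU x)%:E = \int[mu]_x (fV x)%:E)%E ->
  (\int[mu]_x (x * fU x)%:E = \int[mu]_x (x * fV x)%:E)%E ->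
  (forall x, x < a \/ b < x -> fU x <= fV x) ->
  (forall x, a < x < b -> fV x <= fU x) ->
  convex_order_le fU fV.
Proof.
move=> ab U_int V_int xU_int xV_int mass_eq mean_eq U_le_V V_le_U g g_cvx gU_int gV_int.
pose c0 := (b * g a - a * g b) / (b - a); pose c1 := (g b - g a) / (b - a).
have chordE x : chord g a b x = c0 + c1 * x by rewrite chord_affine.
have lU_int := integrable_affine_mul U_int xU_int c0 c1.
have lV_int := integrable_affine_mul V_int xV_int c0 c1.
have chord_moment_eq :
    \int[mu]_x ((c0 + c1 * x) * fU x) = \int[mu]_x ((c0 + c1 * x) * fV x).
  by rewrite !Rintegral_affine_mul // /Rintegral mass_eq mean_eq.
have sign x : 0 <= (g x - chord g a b x) * (fV x - fU x).
  apply: convex_chord_gap_mul_ge0 => // [/orP x_out|x_in]; rewrite ?subr_ge0 ?subr_le0.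
  - exact: U_le_V.
  - exact: V_le_U.
have : 0 <= \int[mu]_x ((g x * fV x - g x * fU x) -
                        ((c0 + c1 * x) * fV x - (c0 + c1 * x) * fU x)).
  apply: Rintegral_ge0 => x _; have := sign x; rewrite chordE.
  by congr (_ <= _); ring.
rewrite (RintegralB measurableT (integrableB measurableT gV_int gU_int)
  (integrableB measurableT lV_int lU_int)).
rewrite (RintegralB measurableT gV_int gU_int) (RintegralB measurableT lV_int lU_int).
rewrite chord_moment_eq subrr subr0 subr_ge0.
rewrite -(fineK (integrable_fin_num measurableT gU_int)).
by rewrite -(fineK (integrable_fin_num measurableT gV_int)) lee_fin.
Qed.

Lemma integrable_of_integral_eq1 {R : realType} (u : R -> R) :
  measurable_fun [set: R] u -> (forall x, 0 <= u x) ->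
  (\int[mu]_x (u x)%:E = 1)%E -> mu.-integrable [set: R] (fun x => (u x)%:E).
Proof.
move=> u_meas u_ge0 u1; apply/integrableP; split; first exact/measurable_EFinP.
by under eq_integral do rewrite abse_EFin ger0_norm //; rewrite u1 ltry.
Qed.

Section log_density_vs_gauss.
Variables (R : realType) (phi : R -> R) (s2 : R).
Hypotheses (s2_gt0 : 0 < s2) (phi_der : forall x, derivable phi x 1).

Local Notation q := (gauss_potential s2).

Let psi x := phi x - q x.

Let is_derive_psi (x : R) : is_derive x 1 psi (derive1 phi x - x / s2).
Proof.
have : is_derive x 1 phi (derive1 phi x) by rewrite derive1E; apply/derivableP.
have := is_derive_gauss_potential x (lt0r_neq0 s2_gt0).
by move=> ? ?; exact: is_deriveB.
Qed.

Let psi_cont : continuous psi.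
Proof.
move=> x; apply: differentiable_continuous; apply/derivable1_diffP.
by have ? := is_derive_psi x; exact: ex_derive.
Qed.

Let ratio_le_of_psi x y : psi x <= psi y ->
  expR (- phi y) * expR (q y) <= expR (- phi x) * expR (q x).
Proof. by rewrite -!expRD ler_expR /psi => ?; lra. Qed.

Lemma gauss_ratio_nonincreasing_right (a : R) :
  (forall x, a <= x -> x / s2 <= derive1 phi x) ->
  forall x y, a <= x -> x <= y ->
  expR (- phi y) * expR (q y) <= expR (- phi x) * expR (q x).
Proof.
move=> phi_ge x y ax xy; apply: ratio_le_of_psi.
apply: (@ger0_derive1_ndecry R psi a) => //.
- by move=> z _; have ? := is_derive_psi z; exact: ex_derive.
- move=> z; rewrite in_itv /= andbT => az; have ? := is_derive_psi z.
  by rewrite derive1E derive_val subr_ge0 phi_ge // ltW.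
- exact/continuous_subspaceT.
Qed.

Lemma gauss_ratio_nondecreasing_left (b : R) :
  (forall x, x <= b -> derive1 phi x <= x / s2) ->
  forall x y, y <= x -> x <= b ->
  expR (- phi y) * expR (q y) <= expR (- phi x) * expR (q x).
Proof.
move=> phi_le x y yx xb; apply: ratio_le_of_psi.
apply: (@ler0_derive1_nincrNy R psi b) => //.
- by move=> z _; have ? := is_derive_psi z; exact: ex_derive.
- move=> z; rewrite in_itv /= => zb; have ? := is_derive_psi z.
  by rewrite derive1E derive_val subr_le0 phi_le // ltW.
- exact/continuous_subspaceT.
Qed.

End log_density_vs_gauss.

Theorem corollary2p2 (R : realType) (phi : R -> R) (s2 xl xr : R) :
  (forall x : R, derivable phi x 1) ->
  (* f_X = exp(-phi) is a probability density *)
  (\int[@lebesgue_measure R]_x (expR (- phi x))%:E = 1)%E ->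
  (* mean zero *)
  (@lebesgue_measure R).-integrable [set: R] (fun x => (x * expR (- phi x))%:E) ->
  (\int[@lebesgue_measure R]_x (x * expR (- phi x))%:E = 0)%E ->
  (* finite variance s2 > 0 *)
  (\int[@lebesgue_measure R]_x (x ^+ 2 * expR (- phi x))%:E = s2%:E)%E ->
  0 < s2 ->
  xl < 0 -> 0 < xr ->
  (forall x, x <= xl -> derive1 phi x <= x / s2) ->
  (forall x, xr <= x -> x / s2 <= derive1 phi x) ->
  (forall x, x < xl \/ xr < x ->
     zero_bias_density (fun y => expR (- phi y)) s2 x <= expR (- phi x)) /\
  ((@lebesgue_measure R).-integrable [set: R] (fun x => (x ^+ 3 * expR (- phi x))%:E) ->
   (\int[@lebesgue_measure R]_x (x ^+ 3 * expR (- phi x))%:E = 0)%E ->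
   (forall x, xl < x < xr ->
      expR (- phi x) <= zero_bias_density (fun y => expR (- phi y)) s2 x) ->
   convex_order_le (zero_bias_density (fun y => expR (- phi y)) s2)
                   (fun y => expR (- phi y))).
Proof.
move=> phi_der f1 yf_int mean0 var s2_gt0 xl_lt0 xr_gt0 phi_left phi_right.
set f := fun y => expR (- phi y).
have f_cont : continuous f.
  move=> x; apply: continuous_comp; last exact: continuous_expR.
  apply: continuousN; apply: differentiable_continuous; exact/derivable1_diffP.
have f_ge0 x : 0 <= f x by exact: expR_ge0.
have f_meas : measurable_fun [set: R] f := continuous_measurable_fun f_cont.
have tails x : x < xl \/ xr < x -> zero_bias_density f s2 x <= f x.
  case=> [x_lt|x_gt].
  - apply: zero_bias_density_le_left => //; first by rewrite ltW // (lt_trans x_lt).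
    move=> y yx; apply: (gauss_ratio_nondecreasing_left s2_gt0 phi_der phi_left) => //.
    exact: ltW.
  - apply: zero_bias_density_le_right => //; first by rewrite ltW // (lt_trans _ x_gt).
    move=> y; apply: (gauss_ratio_nonincreasing_right s2_gt0 phi_der phi_right).
    exact: ltW.
split => // y3f_int m3 mid.
have zb1 : (\int[mu]_t (zero_bias_density f s2 t)%:E = 1)%E.
  by rewrite integral_zero_bias_density // var -EFinM mulVf // lt0r_neq0.
apply: (convex_order_le_of_crossing (lt_trans xl_lt0 xr_gt0)) => //.
- apply: integrable_of_integral_eq1 => //; first exact: measurable_zero_bias_density.
  exact: zero_bias_density_ge0.
- exact: integrable_of_integral_eq1.
- exact: integrable_mul_zero_bias_density.
- by rewrite zb1 f1.
- by rewrite integral_mul_zero_bias_density // m3 mule0 mean0.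
Qed.
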